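(* Let $P=(P_1,\ldots,P_n)$ be a reduced profile of linear orders on a finite set of alternatives $A$, with voter set $N=\{1,\ldots,n\}$, and suppose $P$ is single-crossing with respect to some tree on $N$. Then the tree on $N$ which is minimal with respect to $P$ and with respect to which $P$ is single-crossing is unique.
   Context: Voter $i$ prefers $a$ to $b$ is written $a\succ_i b$. A profile is reduced if no two voters have identical linear orders. Given a tree $T=(N,E)$ on the voter set, the profile is single-crossing with respect to $T$ if for every pair of distinct alternatives $a,b$ one of the following holds: (i) there is an edge $e\in E$ (an ''$ab$-cut'') such that, removing $e$ from $T$, the two resulting subtrees have vertex sets $V_1,V_2$ with all voters in $V_1$ preferring $a$ to $b$ and all voters in $V_2$ preferring $b$ to $a$; or (ii) all voters prefer $a$ to $b$, or all voters prefer $b$ to $a$. $T$ is minimal with respect to $P$ if every edge of $T$ is an $ab$-cut for some pair of alternatives $a,b$. *)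

From mathcomp Require Import all_boot.
Set Implicit Arguments. Unset Strict Implicit. Unset Printing Implicit Defensive.

(* A (strict) linear order on alternatives: r a b means "a is preferred to b". *)
Definition linear_order (A : finType) (r : rel A) : Prop :=
  [/\ irreflexive r, transitive r & forall a b, a != b -> r a b || r b a].

Definition profile (A : finType) (n : nat) (P : 'I_n -> rel A) : Prop :=
  forall i, linear_order (P i).

Definition reduced (A : finType) (n : nat) (P : 'I_n -> rel A) : Prop :=
  forall i j, P i =2 P j -> i = j.

Definition simple_graph (V : finType) (T : rel V) : Prop :=
  symmetric T /\ irreflexive T.

Definition has_cycle (V : finType) (T : rel V) : Prop :=
  exists (x : V) (p : seq V),
    [/\ uniq (x :: p), 2 <= size p, path T x p & T (last x p) x].

Definition is_tree (V : finType) (T : rel V) : Prop :=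
  [/\ simple_graph T, (forall x y, connect T x y) & ~ has_cycle T].

Definition remove_edge (V : finType) (T : rel V) (u v : V) : rel V :=
  fun x y => T x y && ([set x; y] != [set u; v]).

(* The edge {u,v} of T is an ab-cut: removing it, all voters in the
   component V1 of u prefer a to b, all voters in the component V2 of v
   prefer b to a (the orientation is covered since (u,v) and (v,u) are
   both listed as edges). *)
Definition ab_cut (A : finType) (n : nat) (P : 'I_n -> rel A)
    (T : rel 'I_n) (u v : 'I_n) (a b : A) : Prop :=
  [/\ T u v,
      (forall x, connect (remove_edge T u v) u x -> P x a b) &
      (forall x, connect (remove_edge T u v) v x -> P x b a)].

Definition single_crossing_wrt (A : finType) (n : nat) (P : 'I_n -> rel A)
    (T : rel 'I_n) : Prop :=
  forall a b : A, a != b ->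
    (exists u v, ab_cut P T u v a b)
    \/ (forall i, P i a b) \/ (forall i, P i b a).

Definition minimal_wrt (A : finType) (n : nat) (P : 'I_n -> rel A)
    (T : rel 'I_n) : Prop :=
  forall u v, T u v -> exists a b, ab_cut P T u v a b \/ ab_cut P T v u a b.

(* An edge {u,w} of the tree is a cut for every pair on which u and w
   disagree, since otherwise u and w would lie on the same side of that pair's
   cut.  Hence the voters "between" u and v -- those preferring a to b whenever
   both u and v do -- are exactly the voters on the tree path from u to v:
   an inner vertex of the path cannot be separated from both ends by a cut, and
   conversely, on a reduced profile, a voter between the two ends of an edge
   agrees with the end on its side on every pair and so coincides with it.
   Thus u and v are adjacent iff they are distinct and nothing lies strictly
   between them, which mentions the profile only: the tree is unique.  On a
   reduced profile two adjacent voters disagree on some pair, so every such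
   tree is minimal. *)
From mathcomp Require Import all_boot.
Set Implicit Arguments. Unset Strict Implicit. Unset Printing Implicit Defensive.

Lemma linear_order_asym (A : finType) (r : rel A) a b :
  linear_order r -> r a b -> ~~ r b a.
Proof.
case=> irr tr _ rab; apply/negP => rba.
by have := tr _ _ _ rab rba; rewrite irr.
Qed.

Lemma linear_order_subrel_eq (A : finType) (r s : rel A) :
  linear_order r -> linear_order s -> subrel r s -> r =2 s.
Proof.
move=> lr ls sub a b; apply/idP/idP; first exact: sub.
move=> sab; case: (lr) => irr _ tot.
have ab : a != b by apply: contraTneq sab => ->; case: ls => ->.
case/orP: (tot a b ab) => // rba.
by have := linear_order_asym ls sab; rewrite sub.
Qed.

Section RemoveEdge.

Variables (V : finType) (T : rel V).

Lemma remove_edgeC u v : remove_edge T u v =2 remove_edge T v u.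
Proof. by move=> x y; rewrite /remove_edge [[set v; u]]setUC. Qed.

Lemma connect_remove_edge u v x :
  connect T u x ->
  connect (remove_edge T u v) u x || connect (remove_edge T u v) v x.
Proof.
pose side y := connect (remove_edge T u v) u y || connect (remove_edge T u v) v y.
suff side_last y p : path T y p -> side y -> side (last y p).
  by case/connectP=> p pth ->; apply: side_last pth _; rewrite /side connect0.
elim: p y => [|z p IHp] y //= /andP[Tyz pth] side_y; apply: IHp pth _.
case E: ([set y; z] == [set u; v]).
  have: z \in [set u; v] by rewrite -(eqP E) set22.
  by case/set2P=> ->; rewrite /side connect0 ?orbT.
have Ryz : remove_edge T u v y z by rewrite /remove_edge Tyz E.
by case/orP: side_y => C; apply/orP; [left | right]; apply: connect_trans C (connect1 Ryz).
Qed.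

Lemma path_remove_edge u v y p :
  u \notin y :: p -> path T y p -> path (remove_edge T u v) y p.
Proof.
move=> u_notin; apply: (sub_in_path (P := predC1 u)); last first.
  by apply/allP=> x x_in /=; apply: contraNneq u_notin => <-.
move=> x z; rewrite !inE => xu zu Txz; rewrite /remove_edge Txz /=.
apply: contraTneq (set21 u v) => <-.
by rewrite !inE !(eq_sym u) (negbTE xu) (negbTE zu).
Qed.

End RemoveEdge.

Definition between (A : finType) n (P : 'I_n -> rel A) (u w v : 'I_n) :=
  forall a b, P u a b -> P v a b -> P w a b.

Section SingleCrossingTree.

Variables (A : finType) (n : nat) (P : 'I_n -> rel A) (T : rel 'I_n).
Hypotheses (hP : profile P) (hR : reduced P).
Hypotheses (T_sym : symmetric T) (T_irr : irreflexive T).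
Hypothesis T_conn : forall x y, connect T x y.
Hypothesis hSC : single_crossing_wrt P T.

Lemma reduced_separating_pair i j :
  i != j -> exists a b, P i a b && ~~ P j a b.
Proof.
move=> ij.
case: (boolP [exists a, exists b, P i a b && ~~ P j a b]).
  by case/existsP=> a /existsP[b h]; exists a, b.
move=> none; case/eqP: ij; apply: hR; apply: linear_order_subrel_eq (hP i) (hP j) _.
move=> a b Pi; apply: contraNT none => nPj.
by apply/existsP; exists a; apply/existsP; exists b; rewrite Pi.
Qed.

Lemma edge_disagreement_cut u w a b :
  T u w -> P u a b -> ~~ P w a b -> ab_cut P T u w a b.
Proof.
move=> Tuw Pu nPw.
have P_asym i : P i a b -> ~~ P i b a by apply: linear_order_asym.
have ab : a != b by apply: contraTneq Pu => ->; case: (hP u) => ->.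
case: (hSC ab) => [[u' [v' [Tuv' Hu' Hv']]] | [Hall | Hall]]; last first.
- by have := P_asym u Pu; rewrite Hall.
- by rewrite Hall in nPw.
case E: ([set u'; v'] == [set u; w]); last first.
  have Ruw : remove_edge T u' v' u w by rewrite /remove_edge Tuw eq_sym E.
  case/orP: (connect_remove_edge v' (T_conn u' u)) => C.
    by rewrite Hu' ?(connect_trans C (connect1 Ruw)) in nPw.
  by have := P_asym u Pu; rewrite Hv'.
have: u \in [set u'; v'] by rewrite (eqP E) set21.
case/set2P=> Eu; last by have := P_asym u Pu; rewrite Hv' // Eu connect0.
have: w \in [set u'; v'] by rewrite (eqP E) set22.
case/set2P=> Ew; first by rewrite Eu Ew T_irr in Tuw.
by subst u' v'.
Qed.

Lemma between_side_eq u v w :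
  T u v -> connect (remove_edge T u v) u w -> between P u w v -> w = u.
Proof.
move=> Tuv Cuw Hb.
suff sub : subrel (P u) (P w).
  by apply: hR => a b; rewrite (linear_order_subrel_eq (hP u) (hP w) sub).
move=> a b Pu.
case Pv: (P v a b); first exact: Hb.
by case: (edge_disagreement_cut Tuv Pu (negbT Pv)) => _ Hu _; apply: Hu.
Qed.

Lemma between_edge u v w : T u v -> between P u w v -> w = u \/ w = v.
Proof.
move=> Tuv Hb; case/orP: (connect_remove_edge v (T_conn u w)) => C.
  by left; apply: between_side_eq Tuv C Hb.
right; apply: (between_side_eq (v := u)); first by rewrite T_sym.
  by rewrite (eq_connect (remove_edgeC T v u)).
by move=> a b Pv Pu; apply: Hb.
Qed.

Lemma between_nonedge u v :
  u != v -> ~~ T u v -> exists w, [/\ w != u, w != v & between P u w v].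
Proof.
move=> uv nTuv.
case/connectP: (T_conn u v) => p0 pth0 last_v.
case: (shortenP pth0) last_v => {pth0}p pth uniq_p _ last_v.
case: p pth uniq_p last_v => [|w p] /=; first by move=> _ _ vu; rewrite vu eqxx in uv.
case/andP=> Tuw pth /andP[u_notin _] last_v.
have wu : w != u by apply: contraTneq Tuw => ->; rewrite T_irr.
have wv : w != v by apply: contraNneq nTuv => <-.
have Cwv : connect (remove_edge T u w) w v.
  by apply/connectP; exists p => //; apply: path_remove_edge; rewrite // inE eq_sym wu.
exists w; split=> // a b Pu Pv; apply: contraT => nPw.
case: (edge_disagreement_cut Tuw Pu nPw) => _ _ Hw.
by have := linear_order_asym (hP v) Pv; rewrite Hw.
Qed.

Lemma edge_iff_nothing_between u v :
  T u v <-> u != v /\ (forall w, between P u w v -> w = u \/ w = v).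
Proof.
split=> [Tuv | [uv Hb]].
  by split; [apply: contraTneq Tuv => ->; rewrite T_irr | move=> w; apply: between_edge].
apply: contraT => nTuv; case: (between_nonedge uv nTuv) => w [wu wv /Hb].
by case=> Ew; [rewrite Ew eqxx in wu | rewrite Ew eqxx in wv].
Qed.

Lemma single_crossing_minimal : minimal_wrt P T.
Proof.
move=> u v Tuv.
have uv : u != v by apply: contraTneq Tuv => ->; rewrite T_irr.
case: (reduced_separating_pair uv) => a [b /andP[Pu nPv]].
by exists a, b; left; apply: edge_disagreement_cut.
Qed.

End SingleCrossingTree.

Theorem theorem4 (A : finType) (n : nat) (P : 'I_n -> rel A) :
  profile P -> reduced P ->
  (exists T : rel 'I_n, is_tree T /\ single_crossing_wrt P T) ->
  (exists T : rel 'I_n, [/\ is_tree T, single_crossing_wrt P T & minimal_wrt P T])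
  /\
  (forall T1 T2 : rel 'I_n,
      is_tree T1 -> single_crossing_wrt P T1 -> minimal_wrt P T1 ->
      is_tree T2 -> single_crossing_wrt P T2 -> minimal_wrt P T2 ->
      T1 =2 T2).
Proof.
move=> hP hR [T [hT hSC]]; split.
  have [[T_sym T_irr] T_conn _] := hT.
  by exists T; split=> //; apply: single_crossing_minimal.
move=> T1 T2 [[sym1 irr1] conn1 _] sc1 _ [[sym2 irr2] conn2 _] sc2 _ u v.
have E1 := edge_iff_nothing_between hP hR sym1 irr1 conn1 sc1 u v.
have E2 := edge_iff_nothing_between hP hR sym2 irr2 conn2 sc2 u v.
by apply/idP/idP => [/E1/E2 | /E2/E1].
Qed.
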